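(* Let $T$ be an MFQST with degree bound $\phi\ge3$. Then every Steiner point $s$ of $T$ satisfies $\phi\le\deg s\le 2\phi-3$.
   Context: Let $Z=\{z_1,\dots,z_n\}\subset\mathbb{R}^2$ ($n\ge 1$) be a set of sources and $z_{BS}\in\mathbb{R}^2\setminus Z$ a sink; each source has supply $1$. A flow-dependent quadratic Steiner tree (FQST) consists of a finite set $S\subset\mathbb{R}^2$ of Steiner points and a tree $T$ with vertex set $Z\cup S\cup\{z_{BS}\}$ whose edges are directed towards $z_{BS}$. Every node other than the sink has exactly one out-edge, and the sink has none. Each edge $e$ carries a positive flow $f(e)$ such that: - at each source, the flow on its out-edge minus the total flow on its in-edges equals $1$; - at each Steiner point, the out-flow equals the total in-flow; - the sink receives total flow $n$. The cost is $L(T)=\sum_{e\in E(T)} f(e)|e|^2$. An MFQST with degree bound $\phi$ is an FQST minimising $L$ among all FQSTs (any finite $S$, any topology) in which every Steiner point has degree at least $\phi$. *)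

From Stdlib Require Import Reals Lra Lia List.
Import ListNotations.
Open Scope R_scope.

Definition point := (R * R)%type.

Definition dist2 (p q : point) : R :=
  (fst p - fst q) ^ 2 + (snd p - snd q) ^ 2.

Inductive vertex : Type :=
| Src : nat -> vertex
| Stn : nat -> vertex
| Sink : vertex.

Definition vertex_eq_dec (u v : vertex) : {u = v} + {u <> v}.
Proof. decide equality; apply Nat.eq_dec. Defined.

Definition valid_vertex (n m : nat) (v : vertex) : Prop :=
  match v with
  | Src i => (i < n)%nat
  | Stn j => (j < m)%nat
  | Sink => True
  end.

(* All non-sink vertices (each has exactly one out-edge (v, par v)). *)
Definition nonsink_vertices (n m : nat) : list vertex :=
  map Src (seq 0 n) ++ map Stn (seq 0 m).

Definition pos (z : nat -> point) (zBS : point) (s : nat -> point) (v : vertex) : point :=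
  match v with
  | Src i => z i
  | Stn j => s j
  | Sink => zBS
  end.

Definition Rsum {A : Type} (F : A -> R) (l : list A) : R :=
  fold_right (fun a acc => F a + acc) 0 l.

Definition children (n m : nat) (par : vertex -> vertex) (w : vertex) : list vertex :=
  filter (fun u => if vertex_eq_dec (par u) w then true else false)
         (nonsink_vertices n m).

Definition inflow (n m : nat) (par : vertex -> vertex) (f : vertex -> R) (w : vertex) : R :=
  Rsum f (children n m par w).

(* degree of a non-sink vertex: its out-edge plus its in-edges *)
Definition degree (n m : nat) (par : vertex -> vertex) (v : vertex) : nat :=
  S (length (children n m par v)).

(* An FQST for sources z_0..z_{n-1} and sink zBS: m Steiner points s_0..s_{m-1}
   (distinct points of the plane, distinct from sources and sink), a tree given by
   its parent map par (the out-edge of each non-sink vertex is (v, par v); the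
   graph is a tree directed to the sink iff iterating par reaches the sink), and
   positive edge flows f (f v = flow on the out-edge of v). *)
Definition is_FQST (n : nat) (z : nat -> point) (zBS : point)
  (m : nat) (s : nat -> point) (par : vertex -> vertex) (f : vertex -> R) : Prop :=
  (forall j1 j2, (j1 < m)%nat -> (j2 < m)%nat -> s j1 = s j2 -> j1 = j2) /\
  (forall j i, (j < m)%nat -> (i < n)%nat -> s j <> z i) /\
  (forall j, (j < m)%nat -> s j <> zBS) /\
  (forall v, In v (nonsink_vertices n m) -> valid_vertex n m (par v)) /\
  (forall v, In v (nonsink_vertices n m) -> exists k, Nat.iter k par v = Sink) /\
  (forall v, In v (nonsink_vertices n m) -> 0 < f v) /\
  (forall i, (i < n)%nat -> f (Src i) - inflow n m par f (Src i) = 1) /\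
  (forall j, (j < m)%nat -> f (Stn j) = inflow n m par f (Stn j)) /\
  inflow n m par f Sink = INR n.

Definition cost (n : nat) (z : nat -> point) (zBS : point)
  (m : nat) (s : nat -> point) (par : vertex -> vertex) (f : vertex -> R) : R :=
  Rsum (fun v => f v * dist2 (pos z zBS s v) (pos z zBS s (par v)))
       (nonsink_vertices n m).

Definition steiner_deg_bound (n m : nat) (par : vertex -> vertex) (phi : nat) : Prop :=
  forall j, (j < m)%nat -> (phi <= degree n m par (Stn j))%nat.

Definition is_MFQST (phi n : nat) (z : nat -> point) (zBS : point)
  (m : nat) (s : nat -> point) (par : vertex -> vertex) (f : vertex -> R) : Prop :=
  is_FQST n z zBS m s par f /\ steiner_deg_bound n m par phi /\
  forall m' s' par' f',
    is_FQST n z zBS m' s' par' f' -> steiner_deg_bound n m' par' phi ->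
    cost n z zBS m s par f <= cost n z zBS m' s' par' f'.

From Pilot Require Import Defs.
From Stdlib Require Import Reals Lra Lia List Permutation Classical.
Import ListNotations.
Open Scope R_scope.

(* Suppose a Steiner point s has degree >= 2 phi - 2, i.e. at least 2 phi - 3
   children.  Among them we choose a set A of phi - 1 children whose flow-weighted
   displacement U = sum_{u in A} f(u) (p(u) - s) is non-zero: if every
   (phi - 1)-subset had zero displacement, exchanging elements would force every
   child to have the same, hence zero, displacement, whereas a child sits at a
   point other than s and carries positive flow.  We then split A off to a new
   Steiner point q = s + t U whose out-edge q -> s carries the total flow F of A.
   The new point has degree phi, s keeps degree >= phi, and the cost changes by
   2 t |U|^2 (t F - 1) < 0 for small t > 0, contradicting minimality. *)

Lemma Rsum_app {A} (F : A -> R) l1 l2 : Rsum F (l1 ++ l2) = Rsum F l1 + Rsum F l2.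
Proof. induction l1; simpl; [lra | rewrite IHl1; lra]. Qed.

Lemma Rsum_perm {A} (F : A -> R) l1 l2 : Permutation l1 l2 -> Rsum F l1 = Rsum F l2.
Proof. induction 1; simpl; lra. Qed.

Lemma Rsum_ext_in {A} (F G : A -> R) l :
  (forall x, In x l -> F x = G x) -> Rsum F l = Rsum G l.
Proof. induction l; simpl; intros H; auto. rewrite H, IHl; auto. Qed.

Lemma Rsum_plus {A} (F G : A -> R) l : Rsum (fun u => F u + G u) l = Rsum F l + Rsum G l.
Proof. induction l; simpl; [lra | rewrite IHl; lra]. Qed.

Lemma Rsum_if {A} (D : A -> R) (P : A -> bool) l :
  Rsum (fun u => if P u then D u else 0) l = Rsum D (filter P l).
Proof. induction l; simpl; auto. destruct (P a); simpl; rewrite IHl; lra. Qed.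

Lemma Rsum_filter_split {A} (F : A -> R) (P : A -> bool) l :
  Rsum F l = Rsum F (filter P l) + Rsum F (filter (fun x => negb (P x)) l).
Proof. induction l; simpl; [lra | destruct (P a); simpl; rewrite IHl; lra]. Qed.

Lemma Rsum_pos {A} (F : A -> R) l : (forall x, In x l -> 0 < F x) -> l <> [] -> 0 < Rsum F l.
Proof.
  induction l as [|a l IH]; simpl; intros H Hne; [congruence|].
  specialize (H a (or_introl eq_refl)) as Ha.
  destruct l as [|b l]; simpl; [lra|].
  assert (0 < Rsum F (b :: l)) by (apply IH; [intros; apply H; auto | discriminate]).
  simpl in *; lra.
Qed.

Lemma Rsum_const {A} (F : A -> R) l c :
  (forall x, In x l -> F x = c) -> Rsum F l = INR (length l) * c.
Proof.
  induction l; simpl; intros H; [lra|].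
  rewrite IHl, H by auto. destruct (length l); simpl; lra.
Qed.

Lemma Rsum_dist2_shift {A} (w : A -> R) (g : A -> point) (c : point) U1 U2 t l :
  Rsum (fun u => w u * (dist2 (g u) (fst c + t * U1, snd c + t * U2) - dist2 (g u) c)) l =
  - 2 * t * (U1 * Rsum (fun u => w u * (fst (g u) - fst c)) l
             + U2 * Rsum (fun u => w u * (snd (g u) - snd c)) l)
  + t ^ 2 * (U1 ^ 2 + U2 ^ 2) * Rsum w l.
Proof. induction l; simpl; [ring|]. rewrite IHl. unfold dist2; simpl. ring. Qed.

Lemma filter_filter {A} (P Q : A -> bool) l :
  filter P (filter Q l) = filter (fun x => andb (Q x) (P x)) l.
Proof.
  induction l as [|a l IH]; simpl; auto.
  destruct (Q a); simpl; [destruct (P a)|]; simpl; rewrite ?IH; auto.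
Qed.

Lemma NoDup_firstn {A} (l : list A) k : NoDup l -> NoDup (firstn k l).
Proof. intros H. rewrite <- (firstn_skipn k l) in H. eapply NoDup_app_remove_r; eauto. Qed.

Lemma incl_firstn {A} (l : list A) k : incl (firstn k l) l.
Proof. intros x Hx. rewrite <- (firstn_skipn k l). apply in_or_app; auto. Qed.

Definition memb (A : list vertex) (v : vertex) : bool :=
  if in_dec vertex_eq_dec v A then true else false.

Lemma memb_spec A v : memb A v = true <-> In v A.
Proof. unfold memb; destruct in_dec; split; auto; discriminate. Qed.

Lemma perm_filter_memb (A C : list vertex) : NoDup C -> NoDup A -> incl A C ->
  Permutation (filter (memb A) C) A.
Proof.
  intros. apply NoDup_Permutation; auto; [apply NoDup_filter; auto|].
  intros x; rewrite filter_In, memb_spec. split; [tauto | auto].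
Qed.

Lemma In_nonsink n m v : In v (nonsink_vertices n m) <-> valid_vertex n m v /\ v <> Sink.
Proof.
  unfold nonsink_vertices. rewrite in_app_iff, !in_map_iff.
  split.
  - intros [[i [<- Hi]]|[i [<- Hi]]]; apply in_seq in Hi; simpl; split; try lia; discriminate.
  - destruct v as [i|i|]; simpl; intros [H1 H2]; [left|right|congruence];
      exists i; split; auto; apply in_seq; lia.
Qed.

Lemma nonsink_S n m : nonsink_vertices n (S m) = nonsink_vertices n m ++ [Stn m].
Proof. unfold nonsink_vertices. rewrite seq_S, map_app. simpl. now rewrite app_assoc. Qed.

Lemma nonsink_NoDup n m : NoDup (nonsink_vertices n m).
Proof.
  unfold nonsink_vertices. apply NoDup_app.
  - apply FinFun.Injective_map_NoDup; [intros a b H; now inversion H | apply seq_NoDup].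
  - apply FinFun.Injective_map_NoDup; [intros a b H; now inversion H | apply seq_NoDup].
  - intros a Ha Hb. apply in_map_iff in Ha, Hb.
    destruct Ha as [x [<- _]], Hb as [y [H _]]. discriminate.
Qed.

Definition points_to (p : vertex -> vertex) (w u : vertex) : bool :=
  if vertex_eq_dec (p u) w then true else false.

Lemma children_points_to n m par w :
  children n m par w = filter (points_to par w) (nonsink_vertices n m).
Proof. reflexivity. Qed.

Lemma In_children n m par w u :
  In u (children n m par w) <-> In u (nonsink_vertices n m) /\ par u = w.
Proof.
  unfold children. rewrite filter_In. destruct vertex_eq_dec; intuition congruence.
Qed.

(* In an FQST no vertex is its own parent, since iterating par reaches the sink. *)
Lemma FQST_par_neq n z zBS m s par f v :
  is_FQST n z zBS m s par f -> In v (nonsink_vertices n m) -> par v <> v.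
Proof.
  intros (_&_&_&_&Hreach&_) Hv E. destruct (Hreach v Hv) as [k Hk].
  assert (Hfix : forall i, Nat.iter i par v = v) by (induction i; simpl; congruence).
  rewrite Hfix in Hk. subst. apply In_nonsink in Hv. tauto.
Qed.

(* Splitting: the children of s_j selected by P are re-attached to a new Steiner
   point s_m located at q, whose out-edge goes to s_j and carries their total flow. *)
Section Split.
Variables (n m : nat) (z : nat -> point) (zBS : point) (s : nat -> point)
  (par : vertex -> vertex) (f : vertex -> R) (j : nat) (P : vertex -> bool) (q : point).
Hypothesis hT : is_FQST n z zBS m s par f.
Hypothesis hj : (j < m)%nat.
Hypothesis hP : forall u, In u (nonsink_vertices n m) -> P u = true -> par u = Stn j.
Hypothesis hPne : exists u, In u (nonsink_vertices n m) /\ P u = true.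
Hypothesis hq1 : forall k, (k < m)%nat -> q <> s k.
Hypothesis hq2 : forall i, (i < n)%nat -> q <> z i.
Hypothesis hq3 : q <> zBS.

Let NS := nonsink_vertices n m.

Definition split_flow := Rsum f (filter P NS).
Definition split_par v :=
  if vertex_eq_dec v (Stn m) then Stn j else if P v then Stn m else par v.
Definition split_f v := if vertex_eq_dec v (Stn m) then split_flow else f v.
Definition split_pos k := if Nat.eq_dec k m then q else s k.

Lemma NS_neq_new u : In u NS -> u <> Stn m.
Proof. intros H ->. apply In_nonsink in H. simpl in H. lia. Qed.

Lemma par_valid u : In u NS -> valid_vertex n m (par u).
Proof. destruct hT as (_&_&_&H&_). apply H. Qed.

Lemma par_neq_new u : In u NS -> par u <> Stn m.
Proof. intros H E. apply par_valid in H. rewrite E in H. simpl in H. lia. Qed.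

Lemma split_par_old u : In u NS -> split_par u = if P u then Stn m else par u.
Proof. intros H. unfold split_par. destruct vertex_eq_dec; auto. now apply NS_neq_new in H. Qed.

Lemma split_par_new : split_par (Stn m) = Stn j.
Proof. unfold split_par. destruct vertex_eq_dec; congruence. Qed.

Lemma split_f_old u : In u NS -> split_f u = f u.
Proof. intros H. unfold split_f. destruct vertex_eq_dec; auto. now apply NS_neq_new in H. Qed.

Lemma split_f_new : split_f (Stn m) = split_flow.
Proof. unfold split_f. destruct vertex_eq_dec; congruence. Qed.

Lemma split_pos_new : Defs.pos z zBS split_pos (Stn m) = q.
Proof. simpl. unfold split_pos. destruct Nat.eq_dec; congruence. Qed.

Lemma split_pos_old u : valid_vertex n m u -> Defs.pos z zBS split_pos u = Defs.pos z zBS s u.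
Proof. destruct u; simpl; auto. unfold split_pos. destruct Nat.eq_dec; auto; lia. Qed.

Lemma split_children_new_last w : w <> Stn j ->
  filter (points_to split_par w) [Stn m] = [].
Proof. intros H. cbn [filter]. unfold points_to. rewrite split_par_new. destruct vertex_eq_dec; congruence. Qed.

Lemma split_children_other w : w <> Stn j -> w <> Stn m ->
  children n (S m) split_par w = children n m par w.
Proof.
  intros H1 H2. rewrite !children_points_to, nonsink_S, filter_app, split_children_new_last,
    app_nil_r by auto.
  apply filter_ext_in. intros u Hu. unfold points_to. rewrite split_par_old by auto.
  destruct (P u) eqn:E; auto. rewrite hP by auto.
  destruct vertex_eq_dec; try congruence. destruct vertex_eq_dec; congruence.
Qed.

Lemma split_children_new : children n (S m) split_par (Stn m) = filter P NS.
Proof.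
  rewrite children_points_to, nonsink_S, filter_app, split_children_new_last, app_nil_r
    by (intros E; inversion E; lia).
  apply filter_ext_in. intros u Hu. unfold points_to. rewrite split_par_old by auto.
  destruct (P u); destruct vertex_eq_dec; auto; try congruence.
  exfalso; eapply par_neq_new; eauto.
Qed.

Lemma split_children_j : children n (S m) split_par (Stn j) =
  filter (fun u => andb (points_to par (Stn j) u) (negb (P u))) NS ++ [Stn m].
Proof.
  rewrite children_points_to, nonsink_S, filter_app. cbn [filter].
  unfold points_to at 2. rewrite split_par_new.
  destruct vertex_eq_dec as [_|C]; [|now elim C]. f_equal.
  apply filter_ext_in. intros u Hu.
  unfold points_to. rewrite split_par_old by auto.
  destruct (P u); cbn [negb]; rewrite ?Bool.andb_false_r, ?Bool.andb_true_r;
    destruct vertex_eq_dec as [E|]; auto; inversion E; lia.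
Qed.

Lemma children_P : filter (fun u => andb (points_to par (Stn j) u) (P u)) NS = filter P NS.
Proof.
  apply filter_ext_in. intros u Hu. unfold points_to.
  destruct (P u) eqn:E; simpl; [rewrite hP by auto|]; destruct vertex_eq_dec; auto.
Qed.

Lemma inflow_split : inflow n m par f (Stn j) =
  Rsum f (filter (fun u => andb (points_to par (Stn j) u) (negb (P u))) NS) + split_flow.
Proof.
  unfold inflow, split_flow. rewrite children_points_to. fold NS. rewrite (Rsum_filter_split f P),
    !filter_filter, children_P. lra.
Qed.

Lemma split_inflow_other w : w <> Stn j -> w <> Stn m ->
  inflow n (S m) split_par split_f w = inflow n m par f w.
Proof.
  intros. unfold inflow. rewrite split_children_other by auto. apply Rsum_ext_in.
  intros u Hu. apply In_children in Hu. apply split_f_old; tauto.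
Qed.

Lemma split_flow_pos : 0 < split_flow.
Proof.
  destruct hT as (_&_&_&_&_&Hf&_), hPne as [u [Hu HPu]]. apply Rsum_pos.
  - intros x Hx. apply filter_In in Hx. apply Hf. tauto.
  - intros E. assert (Hin : In u (filter P NS)) by (apply filter_In; auto).
    rewrite E in Hin. exact Hin.
Qed.

(* Every vertex still reaches the sink: a P-vertex takes the detour through s_m. *)
Lemma split_reaches_sink k : forall v, (v = Sink \/ In v NS) -> Nat.iter k par v = Sink ->
  exists k', Nat.iter k' split_par v = Sink.
Proof.
  induction k as [|k IH]; intros v Hv Hit; [now exists 0%nat|].
  destruct Hv as [->|Hv]; [now exists 0%nat|].
  rewrite Nat.iter_succ_r in Hit.
  assert (Hpv : par v = Sink \/ In (par v) NS).
  { destruct (vertex_eq_dec (par v) Sink); [left; auto | right].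
    apply In_nonsink. split; auto. apply par_valid; auto. }
  destruct (IH (par v) Hpv Hit) as [k' Hk'].
  destruct (P v) eqn:E.
  - exists (S (S k')). rewrite !Nat.iter_succ_r, (split_par_old v), E, split_par_new, <- (hP v)
      by auto. exact Hk'.
  - exists (S k'). rewrite Nat.iter_succ_r, (split_par_old v), E by auto. exact Hk'.
Qed.

Lemma split_is_FQST : is_FQST n z zBS (S m) split_pos split_par split_f.
Proof.
  pose proof hT as (Hs&Hsz&HsB&Hval&Hreach&Hf&Hsrc&Hstn&Hsink).
  assert (HjNS : In (Stn j) NS) by (apply In_nonsink; simpl; split; [lia|discriminate]).
  assert (HSrc : forall i, (i < n)%nat -> In (Src i) NS)
    by (intros; apply In_nonsink; simpl; split; [lia|discriminate]).
  split; [|split; [|split; [|split; [|split; [|split; [|split; [|split]]]]]]].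
  - intros j1 j2 H1 H2. unfold split_pos.
    destruct Nat.eq_dec, Nat.eq_dec; subst; auto; intros E.
    + exfalso; apply (hq1 j2); auto; lia.
    + exfalso; apply (hq1 j1); auto; lia.
    + apply Hs; auto; lia.
  - intros k i Hk Hi. unfold split_pos. destruct Nat.eq_dec; auto. apply Hsz; lia.
  - intros k Hk. unfold split_pos. destruct Nat.eq_dec; auto. apply HsB; lia.
  - intros v Hv. rewrite nonsink_S in Hv. apply in_app_or in Hv as [Hv|[<-|[]]].
    + rewrite split_par_old by auto. destruct (P v); simpl; [lia|].
      pose proof (par_valid v Hv). destruct (par v); simpl in *; auto; lia.
    + rewrite split_par_new. simpl. lia.
  - intros v Hv. rewrite nonsink_S in Hv. apply in_app_or in Hv as [Hv|[<-|[]]].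
    + destruct (Hreach v Hv) as [k Hk]. eapply split_reaches_sink; eauto.
    + destruct (Hreach (Stn j) HjNS) as [k Hk].
      destruct (split_reaches_sink k (Stn j) (or_intror HjNS) Hk) as [k' Hk'].
      exists (S k'). rewrite Nat.iter_succ_r, split_par_new. exact Hk'.
  - intros v Hv. rewrite nonsink_S in Hv. apply in_app_or in Hv as [Hv|[<-|[]]].
    + rewrite split_f_old by auto. auto.
    + rewrite split_f_new. apply split_flow_pos.
  - intros i Hi. rewrite split_inflow_other, split_f_old by (auto; discriminate).
    apply Hsrc; auto.
  - intros k Hk. destruct (Nat.eq_dec k m) as [->|Hkm]; [|destruct (Nat.eq_dec k j) as [->|Hkj]].
    + unfold inflow. rewrite split_children_new, split_f_new. unfold split_flow.
      apply Rsum_ext_in. intros u Hu. apply filter_In in Hu. symmetry; apply split_f_old; tauto.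
    + unfold inflow at 1. rewrite split_children_j, Rsum_app. simpl.
      rewrite split_f_new, split_f_old, Hstn, inflow_split by auto.
      rewrite (Rsum_ext_in split_f f); [lra|].
      intros u Hu. apply filter_In in Hu. apply split_f_old; tauto.
    + rewrite split_inflow_other by congruence.
      rewrite split_f_old by (apply In_nonsink; simpl; split; [lia|discriminate]).
      apply Hstn; lia.
  - rewrite split_inflow_other by discriminate. auto.
Qed.

Lemma split_degree_bound phi :
  steiner_deg_bound n m par phi ->
  length (filter P NS) = (phi - 1)%nat ->
  (2 * phi - 3 <= length (children n m par (Stn j)))%nat ->
  steiner_deg_bound n (S m) split_par phi.
Proof.
  intros Hdeg HP HC k Hk. unfold degree.
  destruct (Nat.eq_dec k m) as [->|Hkm]; [|destruct (Nat.eq_dec k j) as [->|Hkj]].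
  - rewrite split_children_new. lia.
  - rewrite split_children_j, length_app, <- filter_filter. simpl.
    pose proof (filter_length P (children n m par (Stn j))) as E.
    rewrite children_points_to, filter_filter in E. fold NS in E. rewrite children_P in E. rewrite children_points_to in HC. fold NS in HC. lia.
  - rewrite split_children_other by congruence. apply Hdeg. lia.
Qed.

Lemma split_cost : cost n z zBS (S m) split_pos split_par split_f =
  cost n z zBS m s par f +
  Rsum (fun u => f u * (dist2 (Defs.pos z zBS s u) q - dist2 (Defs.pos z zBS s u) (s j)))
       (filter P NS)
  + split_flow * dist2 q (s j).
Proof.
  unfold cost. rewrite nonsink_S, Rsum_app. cbn [Rsum fold_right].
  rewrite split_par_new, split_f_new, split_pos_new, split_pos_old by (simpl; lia). cbn [Defs.pos].
  fold NS.
  rewrite (Rsum_ext_in _ (fun u => f u * dist2 (Defs.pos z zBS s u) (Defs.pos z zBS s (par u)) +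
     (if P u then f u * (dist2 (Defs.pos z zBS s u) q - dist2 (Defs.pos z zBS s u) (s j))
      else 0))).
  - rewrite Rsum_plus, Rsum_if. lra.
  - intros u Hu. pose proof (proj1 (In_nonsink n m u) Hu) as [Hv _].
    rewrite split_f_old, split_pos_old, split_par_old by auto. destruct (P u) eqn:E.
    + rewrite split_pos_new, (hP u) by auto. simpl. ring.
    + rewrite split_pos_old by (apply par_valid; auto). ring.
Qed.

End Split.

Definition xmoment (z : nat -> point) (zBS : point) (s : nat -> point) (f : vertex -> R)
  (c : point) (u : vertex) : R := f u * (fst (Defs.pos z zBS s u) - fst c).
Definition ymoment (z : nat -> point) (zBS : point) (s : nat -> point) (f : vertex -> R)
  (c : point) (u : vertex) : R := f u * (snd (Defs.pos z zBS s u) - snd c).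

(* Every child of a Steiner point s_j sits elsewhere and carries positive flow,
   so its moment about s_j is non-zero. *)
Lemma child_moment_nonzero n z zBS m s par f j c :
  is_FQST n z zBS m s par f -> (j < m)%nat -> In c (children n m par (Stn j)) ->
  xmoment z zBS s f (s j) c <> 0 \/ ymoment z zBS s f (s j) c <> 0.
Proof.
  intros HF Hj Hc. apply In_children in Hc as [HcNS Hpc].
  pose proof HF as (Hs&Hsz&_&_&_&Hf&_).
  assert (Hne : Defs.pos z zBS s c <> s j).
  { pose proof (proj1 (In_nonsink n m c) HcNS) as [Hv Hns].
    destruct c as [i|k|]; simpl in *; intros E.
    - apply (Hsz j i); auto.
    - assert (k = j) by (apply Hs; auto). subst.
      now apply (FQST_par_neq n z zBS m s par f (Stn j)).
    - now elim Hns. }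
  assert (0 < f c) by (apply Hf; auto).
  unfold xmoment, ymoment.
  destruct (Req_dec (fst (Defs.pos z zBS s c)) (fst (s j))) as [E1|E1];
  destruct (Req_dec (snd (Defs.pos z zBS s c)) (snd (s j))) as [E2|E2].
  - exfalso; apply Hne, injective_projections; auto.
  - right; apply Rmult_integral_contrapositive; split; lra.
  - left; apply Rmult_integral_contrapositive; split; lra.
  - left; apply Rmult_integral_contrapositive; split; lra.
Qed.

(* If all k-element subsets of a list C with more than k elements have zero
   w-sum, then w vanishes on C: exchanging two elements shows that w is constant,
   and k times that constant is zero. *)
Lemma k_subset_sums_zero (C : list vertex) (w : vertex -> R) k :
  NoDup C -> (1 <= k)%nat -> (k + 1 <= length C)%nat ->
  (forall A, incl A C -> NoDup A -> length A = k -> Rsum w A = 0) ->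
  forall y, In y C -> w y = 0.
Proof.
  intros HC Hk Hlen Hall.
  destruct C as [|x C']; [simpl in Hlen; lia|].
  assert (Hconst : forall y, In y (x :: C') -> w y = w x).
  { intros y Hy. destruct (vertex_eq_dec y x) as [->|Hyx]; [auto|].
    set (D := filter (fun c => negb (memb [x; y] c)) (x :: C')).
    assert (Hxy : NoDup [x; y]).
    { constructor; [intros [E|[]]; congruence | constructor; [auto | constructor]]. }
    assert (HlD : length D = (length (x :: C') - 2)%nat).
    { assert (Hsub : incl [x; y] (x :: C')) by (intros v [<-|[<-|[]]]; [left|]; auto).
      pose proof (filter_length (memb [x; y]) (x :: C')) as E.
      rewrite (Permutation_length (perm_filter_memb [x; y] (x :: C') HC Hxy Hsub)) in E.
      unfold D. simpl in E |- *. lia. }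
    set (B := firstn (k - 1) D).
    assert (HBD : incl B D) by apply incl_firstn.
    assert (HBnd : NoDup B) by (apply NoDup_firstn, NoDup_filter; auto).
    assert (HlB : length B = (k - 1)%nat) by (apply firstn_length_le; lia).
    assert (Hout : forall v, In v [x; y] -> ~ In v B).
    { intros v Hv HvB. apply HBD, filter_In in HvB as [_ Hb].
      apply memb_spec in Hv. rewrite Hv in Hb. discriminate. }
    assert (HBC : incl B (x :: C')) by (intros v Hv; now apply HBD, filter_In in Hv).
    assert (Hx : Rsum w (x :: B) = 0).
    { apply Hall; [intros v [<-|Hv]; [left|]; auto | constructor; auto | simpl; lia].
      apply Hout; left; auto. }
    assert (Hy' : Rsum w (y :: B) = 0).
    { apply Hall; [intros v [<-|Hv]; auto | constructor; auto | simpl; lia].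
      apply Hout; right; left; auto. }
    simpl in Hx, Hy'. lra. }
  assert (Hsum : Rsum w (firstn k (x :: C')) = INR k * w x).
  { rewrite (Rsum_const _ _ (w x)), firstn_length_le by (try lia;
      intros v Hv; apply Hconst, (incl_firstn _ k); auto). reflexivity. }
  rewrite Hall in Hsum;
    [| apply incl_firstn | apply NoDup_firstn; auto | apply firstn_length_le; lia].
  assert (INR k <> 0) by (apply not_0_INR; lia).
  intros y Hy. rewrite Hconst by auto.
  apply (Rmult_eq_reg_l (INR k)); auto. lra.
Qed.

Lemma choose_subset (C : list vertex) (w1 w2 : vertex -> R) k :
  NoDup C -> (1 <= k)%nat -> (k + 1 <= length C)%nat ->
  (forall c, In c C -> w1 c <> 0 \/ w2 c <> 0) ->
  exists A, incl A C /\ NoDup A /\ length A = k /\ (Rsum w1 A <> 0 \/ Rsum w2 A <> 0).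
Proof.
  intros HC Hk Hlen Hw. apply NNPP. intros Hno.
  assert (Hzero : forall w, w = w1 \/ w = w2 -> forall y, In y C -> w y = 0).
  { intros w Hw'. apply (k_subset_sums_zero C w k); auto.
    intros A H1 H2 H3. apply NNPP. intros H4. apply Hno. exists A.
    destruct Hw' as [->| ->]; auto. }
  destruct C as [|x C']; [simpl in Hlen; lia|].
  destruct (Hw x (or_introl eq_refl)) as [Hx|Hx]; apply Hx, Hzero; auto; left; auto.
Qed.

Lemma select_children n m par j A :
  NoDup A -> incl A (children n m par (Stn j)) ->
  (forall u, In u (nonsink_vertices n m) -> memb A u = true -> par u = Stn j) /\
  (A <> [] -> exists u, In u (nonsink_vertices n m) /\ memb A u = true) /\
  Permutation (filter (memb A) (nonsink_vertices n m)) A.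
Proof.
  intros HA HAC. split; [|split].
  - intros u _ Hu. apply memb_spec, HAC, In_children in Hu. tauto.
  - destruct A as [|a A']; [congruence|]. intros _. exists a. split.
    + apply (In_children n m par (Stn j)), HAC; left; auto.
    + apply memb_spec; left; auto.
  - apply perm_filter_memb; auto; [apply nonsink_NoDup|].
    intros x Hx. apply HAC, In_children in Hx. tauto.
Qed.

Lemma avoid_points (c : point) U1 U2 (HU : U1 <> 0 \/ U2 <> 0) (L : list point) :
  forall a b, a < b -> exists t, a < t < b /\ ~ In (fst c + t * U1, snd c + t * U2) L.
Proof.
  induction L as [|p L IH]; intros a b Hab.
  - exists ((a + b) / 2). split; [lra | simpl; auto].
  - destruct (IH a b Hab) as [t [Ht Hn]].
    destruct (classic ((fst c + t * U1, snd c + t * U2) = p)) as [E|E].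
    + destruct (IH a t (proj1 Ht)) as [t' [Ht' Hn']].
      exists t'. split; [lra|]. intros [E'|E']; [|auto].
      rewrite <- E in E'. injection E' as E1 E2.
      assert (t' = t).
      { destruct HU; [apply (Rmult_eq_reg_r U1) | apply (Rmult_eq_reg_r U2)]; auto; lra. }
      lra.
    + exists t. split; auto. intros [E'|E']; auto.
Qed.

(* Splitting off children of s_j with non-zero total moment U to a new point
   q = s_j + t U, for t > 0 small, yields an FQST of strictly smaller cost: the
   cost changes by 2 t |U|^2 (t F - 1), F being the flow through q. *)
Lemma split_improves n z zBS m s par f j P :
  is_FQST n z zBS m s par f -> (j < m)%nat ->
  (forall u, In u (nonsink_vertices n m) -> P u = true -> par u = Stn j) ->
  (exists u, In u (nonsink_vertices n m) /\ P u = true) ->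
  Rsum (xmoment z zBS s f (s j)) (filter P (nonsink_vertices n m)) <> 0 \/
  Rsum (ymoment z zBS s f (s j)) (filter P (nonsink_vertices n m)) <> 0 ->
  exists q, is_FQST n z zBS (S m) (split_pos m s q) (split_par m par j P) (split_f n m f P) /\
    cost n z zBS (S m) (split_pos m s q) (split_par m par j P) (split_f n m f P) <
    cost n z zBS m s par f.
Proof.
  intros HF Hj hP hPne HU.
  set (U1 := Rsum (xmoment z zBS s f (s j)) (filter P (nonsink_vertices n m))) in *.
  set (U2 := Rsum (ymoment z zBS s f (s j)) (filter P (nonsink_vertices n m))) in *.
  set (F := split_flow n m f P).
  assert (HFpos : 0 < F) by (apply (split_flow_pos n m z zBS s par f P); auto).
  set (L := map s (seq 0 m) ++ map z (seq 0 n) ++ [zBS]).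
  destruct (avoid_points (s j) U1 U2 HU L 0 (/ F)) as [t [Ht HtL]].
  { apply Rinv_0_lt_compat; auto. }
  set (q := (fst (s j) + t * U1, snd (s j) + t * U2)) in *.
  assert (HqL : forall p, In p L -> q <> p) by (intros p Hp ->; auto).
  exists q. split.
  - apply split_is_FQST; auto; intros; apply HqL; unfold L; rewrite !in_app_iff, !in_map_iff.
    + left; exists k; split; auto; apply in_seq; lia.
    + right; left; exists i; split; auto; apply in_seq; lia.
    + right; right; left; auto.
  - assert (Hchange : cost n z zBS (S m) (split_pos m s q) (split_par m par j P)
        (split_f n m f P) = cost n z zBS m s par f + 2 * t * (U1 ^ 2 + U2 ^ 2) * (t * F - 1)).
    { rewrite split_cost by auto. unfold q. rewrite Rsum_dist2_shift.
      unfold U1, U2, F, split_flow, xmoment, ymoment, dist2; simpl. ring. }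
    assert (HN : 0 < U1 ^ 2 + U2 ^ 2).
    { destruct HU as [HU|HU]; [pose proof (Rsqr_pos_lt U1 HU) | pose proof (Rsqr_pos_lt U2 HU)];
        unfold Rsqr in *; nra. }
    assert (HtF : t * F < 1).
    { destruct Ht as [_ Ht]. apply (Rmult_lt_compat_r F) in Ht; auto.
      rewrite Rinv_l in Ht; lra. }
    assert (Hpos : 0 < 2 * t * (U1 ^ 2 + U2 ^ 2)) by (apply Rmult_lt_0_compat; lra).
    pose proof (Rmult_lt_compat_l _ (t * F - 1) 0 Hpos ltac:(lra)) as Hneg.
    rewrite Rmult_0_r in Hneg. lra.
Qed.

Theorem mainTheorem7 (n : nat) (z : nat -> point) (zBS : point) (phi : nat)
  (hn : (1 <= n)%nat)
  (hz : forall i1 i2, (i1 < n)%nat -> (i2 < n)%nat -> z i1 = z i2 -> i1 = i2)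
  (hBS : forall i, (i < n)%nat -> z i <> zBS)
  (hphi : (3 <= phi)%nat)
  (m : nat) (s : nat -> point) (par : vertex -> vertex) (f : vertex -> R)
  (hT : is_MFQST phi n z zBS m s par f) :
  forall j, (j < m)%nat ->
    (phi <= degree n m par (Stn j) <= 2 * phi - 3)%nat.
Proof.
  intros j Hj. destruct hT as (HF & Hdeg & Hmin).
  split; [now apply Hdeg|]. apply Nat.nlt_ge. intros Hgt. unfold degree in Hgt.
  set (C := children n m par (Stn j)) in *.
  destruct (choose_subset C (xmoment z zBS s f (s j)) (ymoment z zBS s f (s j)) (phi - 1))
    as (A & HAC & HAnd & HAlen & HAmom); [apply NoDup_filter, nonsink_NoDup | lia | lia |
      intros c Hc; now apply (child_moment_nonzero n z zBS m s par f j c) |].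
  destruct (select_children n m par j A HAnd HAC) as (hP & hPne & Hperm).
  destruct (split_improves n z zBS m s par f j (memb A)) as [q [HF' Hcost]]; auto.
  - apply hPne. intros ->. simpl in HAlen. lia.
  - now rewrite !(Rsum_perm _ _ _ Hperm).
  - apply (Rlt_not_le _ _ Hcost), Hmin; [exact HF'|].
    apply (split_degree_bound n m z zBS s par f); auto;
      [now rewrite (Permutation_length Hperm) | fold C; lia].
Qed.
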